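(* Let $R$ be a ring with identity and involution $*$, and let $a,b\in R$ with $aR=a^2R$. Then the following are equivalent: (1) $a$ is core invertible with core inverse $a^{\oplus}=b$; (2) $bab=b$, $(ab)^*=ab$ and $ba^2=a$.
   Context: An involution on $R$ satisfies $(a^* )^*=a$, $(ab)^*=b^*a^*$, $(a+b)^*=a^*+b^*$. An element $x\in R$ is a core inverse of $a$ if $axa=a$, $xR=aR$ and $Rx=Ra^*$; it is unique when it exists and is denoted $a^{\oplus}$. $aR=\{ar: r\in R\}$. *)

From mathcomp Require Import all_boot all_algebra.
Set Implicit Arguments. Unset Strict Implicit. Unset Printing Implicit Defensive.
Import GRing.Theory.
Local Open Scope ring_scope.

Definition involution (R : pzRingType) (star : R -> R) : Prop :=
  (forall a, star (star a) = a) /\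
  (forall a b, star (a * b) = star b * star a) /\
  (forall a b, star (a + b) = star a + star b).

Definition rideal (R : pzRingType) (a : R) : R -> Prop := fun x => exists r, x = a * r.
Definition lideal (R : pzRingType) (a : R) : R -> Prop := fun x => exists r, x = r * a.

Definition rideal_eq (R : pzRingType) (a b : R) : Prop :=
  forall x, rideal a x <-> rideal b x.
Definition lideal_eq (R : pzRingType) (a b : R) : Prop :=
  forall x, lideal a x <-> lideal b x.

Definition is_core_inverse (R : pzRingType) (star : R -> R) (a x : R) : Prop :=
  a * x * a = a /\ rideal_eq x a /\ lideal_eq x (star a).

(* Writing the ideal conditions as mutual factorisations, b = t a^* together
   with a b a = a gives b = b (ab)^*, which forces ab to be Hermitian and b to
   be reflexive, and a = b s then yields b a^2 = a.  Conversely, a = a^2 r and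
   b a^2 = a give a b a = a and b a = a r; the factorisations b = (a r) b,
   a = b a^2, b = b b^* a^* and a^* = a^* (a b) then exhibit bR = aR and
   Rb = Ra^*. *)
From mathcomp Require Import all_boot all_algebra.
Import GRing.Theory.
Local Open Scope ring_scope.

Section Ideals.
Variable R : pzRingType.

Lemma rideal_eqP (a b : R) :
  rideal_eq a b <-> (exists r, a = b * r) /\ (exists s, b = a * s).
Proof.
split=> [Hab | [[r ->] [s Hs]] x].
  by split; [apply/(Hab a) | apply/(Hab b)]; exists 1; rewrite mulr1.
split=> [[y ->] | [y ->]]; first by exists (r * y); rewrite mulrA.
by exists (s * y); rewrite {1}Hs !mulrA.
Qed.

Lemma lideal_eqP (a b : R) :
  lideal_eq a b <-> (exists r, a = r * b) /\ (exists s, b = s * a).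
Proof.
split=> [Hab | [[r ->] [s Hs]] x].
  by split; [apply/(Hab a) | apply/(Hab b)]; exists 1; rewrite mul1r.
split=> [[y ->] | [y ->]]; first by exists (y * r); rewrite mulrA.
by exists (y * s); rewrite {1}Hs !mulrA.
Qed.

End Ideals.

Section Involution.
Variables (R : pzRingType) (star : R -> R).
Hypothesis starK : forall a, star (star a) = a.
Hypothesis starM : forall a b, star (a * b) = star b * star a.

Lemma star_inner_inverse {a x : R} :
  a * x * a = a -> star a = star a * star (a * x).
Proof. by move=> axa; rewrite -starM axa. Qed.

Lemma hermitian_of_eq_mul_star (p : R) : p = p * star p -> star p = p.
Proof. by move=> pE; rewrite pE starM starK -pE. Qed.

Lemma core_inverse_outer_hermitian (a b : R) :
  is_core_inverse star a b ->
  [/\ b * a * b = b, star (a * b) = a * b & b * a ^+ 2 = a].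
Proof.
move=> [aba [/rideal_eqP [_ [s as_]] /lideal_eqP [[t bt] _]]].
have bE : b = b * star (a * b).
  by rewrite {1}bt {1}(star_inner_inverse aba) mulrA -bt.
have abH : star (a * b) = a * b.
  by apply: hermitian_of_eq_mul_star; rewrite -mulrA -bE.
have bab : b * a * b = b by rewrite -mulrA -abH -bE.
by split=> //; rewrite expr2 mulrA {2}as_ mulrA bab -as_.
Qed.

Lemma outer_hermitian_core_inverse (a b : R) :
  rideal_eq a (a ^+ 2) ->
  [/\ b * a * b = b, star (a * b) = a * b & b * a ^+ 2 = a] ->
  is_core_inverse star a b.
Proof.
move=> /rideal_eqP [[r ar] _] [bab abH ba2].
have aba : a * b * a = a by rewrite {2}ar mulrA -(mulrA a b) ba2 -expr2 -ar.
have ba : b * a = a * r by rewrite {1}ar mulrA ba2.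
split=> //; split.
- apply/rideal_eqP; split; first by exists (r * b); rewrite mulrA -ba bab.
  by exists (a ^+ 2); rewrite ba2.
- apply/lideal_eqP; split.
    by exists (b * star b); rewrite -mulrA -starM abH mulrA bab.
  by exists (star a * a); rewrite -mulrA -abH -starM aba.
Qed.

End Involution.

Theorem theorem3p5 (R : pzRingType) (star : R -> R) (a b : R) :
  involution star ->
  rideal_eq a (a ^+ 2) ->
  (is_core_inverse star a b <->
   [/\ b * a * b = b, star (a * b) = a * b & b * a ^+ 2 = a]).
Proof.
move=> [starK [starM _]] Ha2.
split; first exact: core_inverse_outer_hermitian.
exact: outer_hermitian_core_inverse.
Qed.
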